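(* Let $f_0:\mathbb{R}^d\to[0,\infty)$ be a probability density, $\lambda>0$, $\bar\epsilon>0$, and assume: for any $\lambda_l<\lambda_h$ in $[\lambda-\bar\epsilon,\lambda+\bar\epsilon]$ and $x,y\in S_{\lambda_h}$, (1) if $x,y$ are disconnected in $S_{\lambda_h}$ then they are disconnected in $S_{\lambda_l}$, and (2) if $x,y$ are connected in $S_{\lambda_l}$ then they are connected in $S_{\lambda_h}$. Let $\mathcal{X}_n$ be a finite subset of $\mathbb{R}^d$, $f:\mathbb{R}^d\to\mathbb{R}$, $\delta>0$, $\eta>0$, and suppose $\epsilon:=\|f-f_0\|_\infty+\eta\le\bar\epsilon$ and $S_{\lambda+\epsilon}\subseteq\hat S_{\delta,\lambda}(f)\subseteq S_{\lambda-\epsilon}$. Then whenever $T(x,y)\ne\hat T(x,y)$ for some $x,y\in\mathbb{R}^d$, we have $\{x,y\}\cap\big(S_{\lambda-\epsilon}\setminus S_{\lambda+\epsilon}\big)\ne\emptyset$.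
   Context: $S_t=\{x:f_0(x)\ge t\}$; ''connected in $S$'' means lying in the same topological connected component of $S$. $\hat S_{\delta,\lambda}(f)=\bigcup_{x\in\mathcal{X}_n,\,f(x)\ge\lambda}B(x,\delta/2)$ with $B$ the open Euclidean ball. The co-clustering relation $T:\mathbb{R}^d\times\mathbb{R}^d\to\{0,1\}$ has $T(x,y)=1$ if $x,y$ both lie outside $S_\lambda$ or lie in the same connected component of $S_\lambda$, and $T(x,y)=0$ otherwise; $\hat T$ is defined the same way with $S_\lambda$ replaced by $\hat S_{\delta,\lambda}(f)$. *)

From HB Require Import structures.
From mathcomp Require Import all_boot all_order all_algebra.
From mathcomp Require Import all_classical all_reals all_analysis.
Set Implicit Arguments. Unset Strict Implicit. Unset Printing Implicit Defensive.
Import Order.TTheory GRing.Theory Num.Theory.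
Import numFieldNormedType.Exports.
Local Open Scope classical_set_scope.
Local Open Scope ring_scope.

Section Defs.
Variables (R : realType) (d : nat).

Definition lvl (f0 : 'rV[R]_d -> R) (t : R) : set 'rV[R]_d :=
  [set x | t <= f0 x].

Definition conn_in (S : set 'rV[R]_d) (x y : 'rV[R]_d) : Prop :=
  connected_component S x y.

Definition eball (x : 'rV[R]_d) (r : R) : set 'rV[R]_d :=
  [set y | Num.sqrt (\sum_(i < d) (x ord0 i - y ord0 i) ^+ 2) < r].

Definition Shat (Xn : set 'rV[R]_d) (f : 'rV[R]_d -> R) (delta lam : R)
  : set 'rV[R]_d :=
  \bigcup_(x in [set x | Xn x /\ lam <= f x]) eball x (delta / 2).

(* co-clustering relation T_S(x,y) = 1 *)
Definition cocluster (S : set 'rV[R]_d) (x y : 'rV[R]_d) : Prop :=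
  (~ S x /\ ~ S y) \/ conn_in S x y.

Definition supdist (f f0 : 'rV[R]_d -> R) : \bar R :=
  ereal_sup [set (`|f x - f0 x|)%:E | x in [set: 'rV[R]_d]].

End Defs.

(* Both S_lam and Shat lie between S_{lam+eps} and S_{lam-eps}.  If neither x
   nor y is in the shell S_{lam-eps} \ S_{lam+eps}, each of them is either in
   the inner set or outside the outer one.  A point outside the outer set is
   outside every set in between; two points of the inner set are connected in
   a set in between iff they are connected in the outer set iff, by the
   stability assumption (2) for the levels lam - eps < lam + eps, they are
   connected in the inner set.  So both co-clustering relations at (x, y)
   coincide with the one of the inner set. *)
From HB Require Import structures.
From mathcomp Require Import all_boot all_order all_algebra.
From mathcomp Require Import all_classical all_reals all_analysis.
Set Implicit Arguments. Unset Strict Implicit. Unset Printing Implicit Defensive.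
Import Order.TTheory GRing.Theory Num.Theory.
Import numFieldNormedType.Exports.
Local Open Scope classical_set_scope.
Local Open Scope ring_scope.

Lemma connected_componentS (T : topologicalType) (A B : set T) (x : T) :
  A `<=` B -> connected_component A x `<=` connected_component B x.
Proof.
move=> AB y [C [Cx CA Cc] Cy]; exists C => //.
by split => //; apply: subset_trans AB.
Qed.

Lemma connected_component_ends (T : topologicalType) (A : set T) (x y : T) :
  connected_component A x y -> A x /\ A y.
Proof.
move=> cxy; split; last exact: connected_component_sub cxy.
exact: connected_component_sub (connected_component_sym cxy).
Qed.

Section Sandwich.
Variables (R : realType) (d : nat) (Slo Shi : set 'rV[R]_d).
Hypothesis (Slo_Shi_conn : forall x y, Slo x -> Slo y ->
  conn_in Shi x y -> conn_in Slo x y).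

Variables (A : set 'rV[R]_d) (x y : 'rV[R]_d).
Hypotheses (loA : Slo `<=` A) (Ahi : A `<=` Shi).
Hypotheses (hx : Slo x \/ ~ Shi x) (hy : Slo y \/ ~ Shi y).

Lemma cocluster_sandwichE :
  cocluster A x y <-> (~ Shi x /\ ~ Shi y) \/ conn_in Slo x y.
Proof.
have lo_of_hi z : Slo z \/ ~ Shi z -> Shi z -> Slo z by case.
have not_hi z : Slo z \/ ~ Shi z -> ~ A z -> ~ Shi z by case=> [/loA|].
split => -[[nx ny]|cxy].
- by left; split; [apply: not_hi hx nx | apply: not_hi hy ny].
- have [/Ahi/(lo_of_hi _ hx) Sx /Ahi/(lo_of_hi _ hy) Sy] :=
    connected_component_ends cxy.
  by right; apply: Slo_Shi_conn => //; apply: connected_componentS Ahi _ _.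
- by left; split => /Ahi.
- by right; apply: connected_componentS loA _ _.
Qed.

End Sandwich.

Lemma le_lvl (R : realType) (d : nat) (f0 : 'rV[R]_d -> R) (s t : R) :
  s <= t -> lvl f0 t `<=` lvl f0 s.
Proof. by move=> st z /(le_trans st). Qed.

Lemma supdist_ge0 (R : realType) (d : nat) (f f0 : 'rV[R]_d -> R) :
  (0 <= supdist f f0)%E.
Proof.
apply: le_trans (ereal_sup_ubound _); last by exists 0.
by rewrite lee_fin.
Qed.

Theorem lemmaS6 (R : realType) (d : nat) (f0 : 'rV[R]_d -> R)
  (lam epsbar : R)
  (hf0 : forall x, 0 <= f0 x)
  (hlam : 0 < lam) (hepsbar : 0 < epsbar)
  (hstab : forall lam_l lam_h : R,
      lam - epsbar <= lam_l -> lam_l < lam_h -> lam_h <= lam + epsbar ->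
      forall x y, lvl f0 lam_h x -> lvl f0 lam_h y ->
        (~ conn_in (lvl f0 lam_h) x y -> ~ conn_in (lvl f0 lam_l) x y) /\
        (conn_in (lvl f0 lam_l) x y -> conn_in (lvl f0 lam_h) x y))
  (Xn : set 'rV[R]_d) (hXn : finite_set Xn)
  (f : 'rV[R]_d -> R) (delta eta eps : R)
  (hdelta : 0 < delta) (heta : 0 < eta)
  (heps : (supdist f f0 + eta%:E)%E = eps%:E)
  (hepsle : eps <= epsbar)
  (hsub1 : lvl f0 (lam + eps) `<=` Shat Xn f delta lam)
  (hsub2 : Shat Xn f delta lam `<=` lvl f0 (lam - eps)) :
  forall x y : 'rV[R]_d,
    ~ (cocluster (lvl f0 lam) x y <-> cocluster (Shat Xn f delta lam) x y) ->
    [set x; y] `&` (lvl f0 (lam - eps) `\` lvl f0 (lam + eps)) !=set0.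
Proof.
have eps_gt0 : 0 < eps.
  move: heps (supdist_ge0 f f0); case: (supdist f f0) => //= r [<-].
  by rewrite lee_fin => /ltr_pwDr; apply.
set Slo := lvl f0 (lam + eps); set Shi := lvl f0 (lam - eps).
have Slo_Shi_conn z w : Slo z -> Slo w -> conn_in Shi z w -> conn_in Slo z w.
  move=> Sz Sw; apply: (hstab _ _ _ _ _ z w Sz Sw).2.
  - by rewrite lerD2l lerN2.
  - by rewrite ltrBlDr -addrA ltrDl addr_gt0.
  - by rewrite lerD2l.
have inner_lam : Slo `<=` lvl f0 lam by apply: le_lvl; rewrite lerDl ltW.
have lam_outer : lvl f0 lam `<=` Shi by apply: le_lvl; rewrite gerBl ltW.
move=> x y; apply: contra_notP => off_shell.
have off z : [set x; y] z -> Slo z \/ ~ Shi z.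
  move=> xyz; have [|nlo] := pselect (Slo z); first by left.
  by right => hiz; apply: off_shell; exists z.
have [offx offy] := (off x (or_introl erefl), off y (or_intror erefl)).
apply: iff_trans
  (cocluster_sandwichE Slo_Shi_conn inner_lam lam_outer offx offy) _.
exact: iff_sym (cocluster_sandwichE Slo_Shi_conn hsub1 hsub2 offx offy).
Qed.
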